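(* For any compilation chain and any trace relation ${\sim} \subseteq \mathit{Trace}_S \times \mathit{Trace}_T$, with existential image $\tilde\tau$ and universal image $\tilde\sigma$, the following are equivalent: (i) $\mathit{TP}^{\tilde\tau}$: for all $\pi_S \subseteq \mathit{Trace}_S$ and all source programs $W$, $W \models \pi_S$ implies $W{\downarrow} \models \tilde\tau(\pi_S)$; (ii) $\mathit{CC}^{\sim}$; (iii) $\mathit{TP}^{\tilde\sigma}$: for all $\pi_T \subseteq \mathit{Trace}_T$ and all source programs $W$, $W \models \tilde\sigma(\pi_T)$ implies $W{\downarrow} \models \pi_T$.
   Context: A compilation chain consists of a set of source (whole) programs $W$, a set of target programs, a set $\mathit{Trace}_S$ of source traces and a set $\mathit{Trace}_T$ of target traces, a source semantics relation $W \rightsquigarrow s$ (program $W$ can produce trace $s$), a target semantics relation of the same kind, and a compiler mapping each source program $W$ to a target program $W{\downarrow}$. A trace property is a set of traces; a program $W$ satisfies $\pi$, written $W \models \pi$, iff every trace $W$ produces belongs to $\pi$. For a relation ${\sim}\subseteq \mathit{Trace}_S\times\mathit{Trace}_T$, its existential image is $\tilde\tau(\pi) = \{t \mid \exists s.\ s \sim t \wedge s \in \pi\}$ for $\pi \subseteq \mathit{Trace}_S$, and its universal image is $\tilde\sigma(\pi) = \{s \mid \forall t.\ s \sim t \Rightarrow t \in \pi\}$ for $\pi \subseteq \mathit{Trace}_T$. The criterion $\mathit{CC}^{\sim}$ states: for every source program $W$ and every $t \in \mathit{Trace}_T$, if $W{\downarrow} \rightsquigarrow t$ then there exists $s \in \mathit{Trace}_S$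 with $s \sim t$ and $W \rightsquigarrow s$. *)

Record CompilationChain := {
  SrcProg : Type;
  TgtProg : Type;
  TraceS : Type;
  TraceT : Type;
  semS : SrcProg -> TraceS -> Prop;
  semT : TgtProg -> TraceT -> Prop;
  compile : SrcProg -> TgtProg
}.

Definition satS (C : CompilationChain) (W : SrcProg C) (pi : TraceS C -> Prop) : Prop :=
  forall s, semS C W s -> pi s.
Definition satT (C : CompilationChain) (P : TgtProg C) (pi : TraceT C -> Prop) : Prop :=
  forall t, semT C P t -> pi t.

Definition tau_img (C : CompilationChain) (rel : TraceS C -> TraceT C -> Prop)
  (pi : TraceS C -> Prop) : TraceT C -> Prop :=
  fun t => exists s, rel s t /\ pi s.
Definition sigma_img (C : CompilationChain) (rel : TraceS C -> TraceT C -> Prop)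
  (pi : TraceT C -> Prop) : TraceS C -> Prop :=
  fun s => forall t, rel s t -> pi t.

Definition TP_tau (C : CompilationChain) (rel : TraceS C -> TraceT C -> Prop) : Prop :=
  forall (piS : TraceS C -> Prop) (W : SrcProg C),
    satS C W piS -> satT C (compile C W) (tau_img C rel piS).

Definition CC_rel (C : CompilationChain) (rel : TraceS C -> TraceT C -> Prop) : Prop :=
  forall (W : SrcProg C) (t : TraceT C),
    semT C (compile C W) t -> exists s, rel s t /\ semS C W s.

Definition TP_sigma (C : CompilationChain) (rel : TraceS C -> TraceT C -> Prop) : Prop :=
  forall (piT : TraceT C -> Prop) (W : SrcProg C),
    satS C W (sigma_img C rel piT) -> satT C (compile C W) piT.

From Stdlib Require Import Setoid.

(* The set of traces of W is the strongest property W satisfies, and CC^~ says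
   precisely that W↓ satisfies its image under τ̃.  Since τ̃ is monotone, this
   gives TP^τ̃.  Since τ̃ is left adjoint to σ̃ (τ̃ π_S ⊆ π_T iff π_S ⊆ σ̃ π_T),
   it is also equivalent to TP^σ̃. *)

Section TraceRelation.

Variable C : CompilationChain.
Variable rel : TraceS C -> TraceT C -> Prop.

Lemma tau_img_sub_iff_sub_sigma_img (piS : TraceS C -> Prop) (piT : TraceT C -> Prop) :
  (forall t, tau_img C rel piS t -> piT t) <->
  (forall s, piS s -> sigma_img C rel piT s).
Proof.
  unfold tau_img, sigma_img; split.
  - intros Htau s Hs t Hst. apply Htau. exists s; split; assumption.
  - intros Hsigma t [s [Hst Hs]]. exact (Hsigma s Hs t Hst).
Qed.

Lemma tau_img_monotone (piS piS' : TraceS C -> Prop) :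
  (forall s, piS s -> piS' s) ->
  forall t, tau_img C rel piS t -> tau_img C rel piS' t.
Proof.
  intros Hsub t [s [Hst Hs]]. exists s; split; auto.
Qed.

Lemma CC_rel_iff_sat_tau_img_semS :
  CC_rel C rel <-> forall W, satT C (compile C W) (tau_img C rel (semS C W)).
Proof.
  unfold CC_rel, satT, tau_img; split; auto.
Qed.

Lemma TP_tau_iff_CC_rel : TP_tau C rel <-> CC_rel C rel.
Proof.
  rewrite CC_rel_iff_sat_tau_img_semS; split.
  - intros Htp W. apply Htp. intros s Hs. exact Hs.
  - intros Hcc piS W HW t Ht. exact (tau_img_monotone _ _ HW t (Hcc W t Ht)).
Qed.

Lemma CC_rel_iff_TP_sigma : CC_rel C rel <-> TP_sigma C rel.
Proof.
  rewrite CC_rel_iff_sat_tau_img_semS; split.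
  - intros Hcc piT W HW t Ht.
    apply (proj2 (tau_img_sub_iff_sub_sigma_img (semS C W) piT) HW).
    exact (Hcc W t Ht).
  - intros Htp W. apply Htp.
    exact (proj1 (tau_img_sub_iff_sub_sigma_img _ _) (fun t Ht => Ht)).
Qed.

End TraceRelation.

Theorem theorem2p6 (C : CompilationChain) (rel : TraceS C -> TraceT C -> Prop) :
  (TP_tau C rel <-> CC_rel C rel) /\ (CC_rel C rel <-> TP_sigma C rel).
Proof.
  split; [apply TP_tau_iff_CC_rel | apply CC_rel_iff_TP_sigma].
Qed.
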